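(* Let $\mathcal{B}$ be a real uniform Banach space, $x_1,\dots,x_m\in\mathcal{B}$, and $Z=\{g\in\mathcal{B}: [g,x_i]=0\ \forall i=1,\dots,m\}$. Then for every $f_0\in\mathcal{B}$ there exists $g\in Z$ such that $(f_0+g)^*\in\operatorname{span}\{x_1^*,\dots,x_m^*\}$ and $\|f_0+g\|\le\|f_0\|$. (Note that $f_0+g$ satisfies $[f_0+g,x_i]=[f_0,x_i]$ for all $i$.)
   Context: A real Banach space $\mathcal{B}$ is called uniform if it is uniformly convex and uniformly smooth (equivalently, its norm is uniformly Fréchet differentiable). On such a space there is a unique semi-inner product inducing the norm, i.e. a unique map $[\cdot,\cdot]:\mathcal{B}\times\mathcal{B}\to\mathbb{R}$ that is linear in the first argument, satisfies $[x,x]=\|x\|^2$, $|[x,y]|^2\le[x,x][y,y]$ and $[x,\lambda y]=\lambda[x,y]$ for $\lambda\in\mathbb{R}$; it is given by $[y,x]=\|x\|\lim_{t\to0}\frac{\|x+ty\|-\|x\|}{t}$ for $x\neq0$ (and $[y,0]=0$). The duality map $x\mapsto x^*\in\mathcal{B}^*$ is defined by $x^*(y)=[y,x]$; it is an isometric bijection $\mathcal{B}\to\mathcal{B}^*$. *)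

From Stdlib Require Import Reals Lra ClassicalEpsilon.
Open Scope R_scope.

Record NormedSpace := {
  V :> Type;
  vadd : V -> V -> V;
  vopp : V -> V;
  vzero : V;
  vscal : R -> V -> V;
  vnorm : V -> R;
  vadd_assoc : forall x y z, vadd x (vadd y z) = vadd (vadd x y) z;
  vadd_comm : forall x y, vadd x y = vadd y x;
  vadd_zero : forall x, vadd x vzero = x;
  vadd_opp : forall x, vadd x (vopp x) = vzero;
  vscal_one : forall x, vscal 1 x = x;
  vscal_assoc : forall a b x, vscal a (vscal b x) = vscal (a * b) x;
  vscal_distr_l : forall a x y, vscal a (vadd x y) = vadd (vscal a x) (vscal a y);
  vscal_distr_r : forall a b x, vscal (a + b) x = vadd (vscal a x) (vscal b x);
  vnorm_nonneg : forall x, 0 <= vnorm x;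
  vnorm_eq0 : forall x, vnorm x = 0 -> x = vzero;
  vnorm_scal : forall a x, vnorm (vscal a x) = Rabs a * vnorm x;
  vnorm_triangle : forall x y, vnorm (vadd x y) <= vnorm x + vnorm y
}.

Arguments vadd {n}. Arguments vopp {n}. Arguments vzero {n}.
Arguments vscal {n}. Arguments vnorm {n}.

Definition vsub {E : NormedSpace} (x y : E) : E := vadd x (vopp y).

Definition complete (E : NormedSpace) : Prop :=
  forall u : nat -> E,
    (forall eps, 0 < eps -> exists N, forall n p, (N <= n)%nat -> (N <= p)%nat ->
        vnorm (vsub (u n) (u p)) < eps) ->
    exists l : E, forall eps, 0 < eps -> exists N, forall n, (N <= n)%nat ->
        vnorm (vsub (u n) l) < eps.

Definition uniformly_convex (E : NormedSpace) : Prop :=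
  forall eps, 0 < eps <= 2 -> exists delta, 0 < delta /\
    forall x y : E, vnorm x <= 1 -> vnorm y <= 1 -> eps <= vnorm (vsub x y) ->
      vnorm (vscal (/2) (vadd x y)) <= 1 - delta.

(* uniform smoothness: modulus of smoothness rho(t) = o(t) as t -> 0+,
   where rho(t) = sup { (||x+ty|| + ||x-ty||)/2 - 1 : ||x|| = ||y|| = 1 } *)
Definition uniformly_smooth (E : NormedSpace) : Prop :=
  forall eps, 0 < eps -> exists delta, 0 < delta /\
    forall (x y : E) (t : R), vnorm x = 1 -> vnorm y = 1 -> 0 < t < delta ->
      (vnorm (vadd x (vscal t y)) + vnorm (vadd x (vscal (- t) y))) / 2 - 1
        <= eps * t.

Definition uniform_banach (E : NormedSpace) : Prop :=
  complete E /\ uniformly_convex E /\ uniformly_smooth E.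

(* semi-inner product [y, x] = ||x|| * lim_{t->0} (||x + t y|| - ||x||)/t
   for x <> 0, and [y, 0] = 0. The limit is the derivative at 0 of
   t |-> ||x + t y||, chosen by epsilon (it exists in a uniform space). *)
Definition sip {E : NormedSpace} (y x : E) : R :=
  match excluded_middle_informative (x = vzero) with
  | left _ => 0
  | right _ =>
      vnorm x * epsilon (inhabits 0)
        (fun l => derivable_pt_lim (fun t => vnorm (vadd x (vscal t y))) 0 l)
  end.

Definition dual {E : NormedSpace} (x : E) : E -> R := fun y => sip y x.

Fixpoint rsum (m : nat) (f : nat -> R) : R :=
  match m with
  | O => 0
  | S k => rsum k f + f k
  end.

Definition in_dual_span {E : NormedSpace} (m : nat) (x : nat -> E) (phi : E -> R) : Prop :=
  exists c : nat -> R, forall y : E, phi y = rsum m (fun i => c i * dual (x i) y).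

(* The set C = {h | [h, x_i] = [f0, x_i] for all i} = f0 + Z is convex and
   closed. By uniform convexity a minimizing sequence for the norm on C is
   Cauchy, so C contains an element l of minimal norm, and ||l|| <= ||f0||.
   For z in Z the function t |-> ||l + t z|| is minimal at 0; uniform
   smoothness makes it differentiable there, with derivative [z, l]/||l||,
   so l^* vanishes on Z, the common kernel of x_1^*, ..., x_m^*. A linear
   functional vanishing on the common kernel of finitely many linear
   functionals is a linear combination of them. *)
From Stdlib Require Import Reals Lra Lia List ClassicalEpsilon Classical.
From Stdlib Require Import FunctionalExtensionality.
Open Scope R_scope.

Section VectorAlgebra.
Variable E : NormedSpace.

Lemma vadd_zero_l (x : E) : vadd vzero x = x.
Proof. rewrite vadd_comm; apply vadd_zero. Qed.

Lemma vadd_cancel_l (a b c : E) : vadd a b = vadd a c -> b = c.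
Proof.
  intro H.
  assert (Hb : b = vadd (vadd (vopp a) a) b).
  { rewrite (vadd_comm _ (vopp a)), vadd_opp, vadd_zero_l; auto. }
  rewrite Hb, <- vadd_assoc, H, vadd_assoc, (vadd_comm _ (vopp a)), vadd_opp, vadd_zero_l; auto.
Qed.

Lemma vscal_zero_l (x : E) : vscal 0 x = vzero.
Proof.
  apply (vadd_cancel_l (vscal 0 x)). rewrite vadd_zero, <- vscal_distr_r.
  f_equal; ring.
Qed.

Lemma vscal_zero_r (a : R) : vscal a (@vzero E) = vzero.
Proof. rewrite <- (vscal_zero_l vzero) at 1. rewrite vscal_assoc, Rmult_0_r; apply vscal_zero_l. Qed.

Lemma vopp_scal (x : E) : vopp x = vscal (-1) x.
Proof.
  apply (vadd_cancel_l x). rewrite vadd_opp.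
  rewrite <- (vscal_one E x) at 1. rewrite <- vscal_distr_r.
  replace (1 + -1) with 0 by ring. symmetry; apply vscal_zero_l.
Qed.

Lemma vnorm_zero : vnorm (@vzero E) = 0.
Proof. rewrite <- (vscal_zero_l vzero), vnorm_scal, Rabs_R0; ring. Qed.

Lemma vnorm_pos (x : E) : x <> vzero -> 0 < vnorm x.
Proof.
  intro Hx. destruct (vnorm_nonneg E x) as [|H0]; auto.
  exfalso; apply Hx, vnorm_eq0; auto.
Qed.

Lemma vnorm_scal_pos (a : R) (x : E) : 0 <= a -> vnorm (vscal a x) = a * vnorm x.
Proof. intro Ha. rewrite vnorm_scal, Rabs_right; lra. Qed.

Lemma vnorm_vopp (x : E) : vnorm (vopp x) = vnorm x.
Proof. rewrite vopp_scal, vnorm_scal, Rabs_left by lra; ring. Qed.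

Lemma vnorm_sub_le (x y : E) : vnorm (vsub x y) <= vnorm x + vnorm y.
Proof. unfold vsub. rewrite <- (vnorm_vopp y). apply vnorm_triangle. Qed.

End VectorAlgebra.

(* Identities in the vector space axioms are decided by comparing the
   coefficients of both sides as linear combinations of (at most three)
   atoms; the tactic [vector_eq a b c] leaves one real equation per atom. *)
Inductive vexp :=
  VVar (n : nat) | VAdd (a b : vexp) | VScal (r : R) (a : vexp) | VOpp (a : vexp) | VZero.

Fixpoint vcoef (e : vexp) (n : nat) : R :=
  match e with
  | VVar k => if Nat.eqb k n then 1 else 0
  | VAdd a b => vcoef a n + vcoef b n
  | VScal r a => r * vcoef a n
  | VOpp a => - vcoef a n
  | VZero => 0
  end.

Fixpoint vbound (e : vexp) (K : nat) : Prop :=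
  match e with
  | VVar k => (k < K)%nat
  | VAdd a b => vbound a K /\ vbound b K
  | VScal _ a | VOpp a => vbound a K
  | VZero => True
  end.

Section Reification.
Variables (E : NormedSpace) (env : nat -> E).

Fixpoint veval (e : vexp) : E :=
  match e with
  | VVar n => env n
  | VAdd a b => vadd (veval a) (veval b)
  | VScal r a => vscal r (veval a)
  | VOpp a => vopp (veval a)
  | VZero => vzero
  end.

Fixpoint vcomb (K : nat) (c : nat -> R) : E :=
  match K with
  | O => vzero
  | S k => vadd (vcomb k c) (vscal (c k) (env k))
  end.

Lemma vcomb_add K (c d : nat -> R) :
  vcomb K (fun n => c n + d n) = vadd (vcomb K c) (vcomb K d).
Proof.
  induction K; simpl; [rewrite vadd_zero; auto|].
  rewrite IHK, vscal_distr_r, <- !vadd_assoc. f_equal.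
  rewrite !vadd_assoc. f_equal. apply vadd_comm.
Qed.

Lemma vcomb_scal K r (c : nat -> R) : vcomb K (fun n => r * c n) = vscal r (vcomb K c).
Proof.
  induction K; simpl; [rewrite vscal_zero_r; auto|].
  rewrite IHK, vscal_distr_l, vscal_assoc; auto.
Qed.

Lemma vcomb_ext K (c d : nat -> R) :
  (forall n, (n < K)%nat -> c n = d n) -> vcomb K c = vcomb K d.
Proof.
  induction K; intro H; simpl; auto.
  rewrite IHK, H by (intros; try apply H; lia); auto.
Qed.

Lemma vcomb_zero K : vcomb K (fun _ => 0) = vzero.
Proof. induction K; simpl; auto. rewrite IHK, vscal_zero_l, vadd_zero; auto. Qed.

Lemma vcomb_unit K k : (k < K)%nat -> vcomb K (fun n => if Nat.eqb k n then 1 else 0) = env k.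
Proof.
  induction K; intro H; [lia|]. simpl.
  destruct (Nat.eqb k K) eqn:Ek.
  - apply Nat.eqb_eq in Ek; subst.
    rewrite (vcomb_ext K _ (fun _ => 0)), vcomb_zero, vadd_zero_l, vscal_one; auto.
    intros n Hn. destruct (Nat.eqb K n) eqn:En; auto. apply Nat.eqb_eq in En; lia.
  - apply Nat.eqb_neq in Ek. rewrite IHK, vscal_zero_l, vadd_zero by lia; auto.
Qed.

Lemma veval_vcomb K e : vbound e K -> veval e = vcomb K (vcoef e).
Proof.
  induction e; simpl; intro Hb.
  - symmetry; apply vcomb_unit; auto.
  - destruct Hb. rewrite IHe1, IHe2, <- vcomb_add by auto; auto.
  - rewrite IHe, <- vcomb_scal by auto; auto.
  - rewrite IHe, vopp_scal, <- vcomb_scal by auto. apply vcomb_ext; intros; ring.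
  - symmetry; apply vcomb_zero.
Qed.

Lemma veval_eq K e1 e2 : vbound e1 K -> vbound e2 K ->
  (forall n, (n < K)%nat -> vcoef e1 n = vcoef e2 n) -> veval e1 = veval e2.
Proof.
  intros H1 H2 H. rewrite (veval_vcomb K e1), (veval_vcomb K e2) by auto.
  apply vcomb_ext; auto.
Qed.

End Reification.

Ltac reify a b c t :=
  lazymatch t with
  | vadd ?u ?v => let r1 := reify a b c u in let r2 := reify a b c v in constr:(VAdd r1 r2)
  | vsub ?u ?v => let r1 := reify a b c u in let r2 := reify a b c v in constr:(VAdd r1 (VOpp r2))
  | vscal ?k ?u => let r := reify a b c u in constr:(VScal k r)
  | vopp ?u => let r := reify a b c u in constr:(VOpp r)
  | vzero => constr:(VZero)
  | _ => lazymatch constr:((t, a, b, c)) with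
         | (?x, ?x, _, _) => constr:(VVar 0)
         | (?x, _, ?x, _) => constr:(VVar 1)
         | (?x, _, _, ?x) => constr:(VVar 2)
         end
  end.

Ltac vector_eq a b c :=
  lazymatch goal with
  | |- @eq _ ?L ?R =>
    let l := reify a b c L in let r := reify a b c R in
    change (veval _ (fun n => nth n (a :: b :: c :: nil) a) l =
            veval _ (fun n => nth n (a :: b :: c :: nil) a) r);
    apply (veval_eq _ _ 3); [simpl; repeat split; lia | simpl; repeat split; lia |
      let n := fresh "n" in intros n ?;
      destruct n as [|[|[|n]]]; [simpl | simpl | simpl | lia]]
  end.

Lemma vadd_vsub (E : NormedSpace) (x y : E) : vadd x (vsub y x) = y.
Proof. vector_eq x y y; ring. Qed.

Lemma vnorm_le_sub (E : NormedSpace) (x y : E) : vnorm x <= vnorm y + vnorm (vsub y x).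
Proof.
  replace x with (vsub y (vsub y x)) at 1 by (vector_eq x y y; ring).
  apply vnorm_sub_le.
Qed.

Lemma exists_inf {A : Type} (P : A -> Prop) (f : A -> R) (b : R) :
  (exists a, P a) -> (forall a, P a -> b <= f a) ->
  exists d, b <= d /\ (forall a, P a -> d <= f a) /\
    (forall e, 0 < e -> exists a, P a /\ f a < d + e).
Proof.
  intros Hne Hb.
  set (S := fun r => exists a, P a /\ r = - f a).
  destruct (completeness S) as [s [Hub Hlub]].
  - exists (- b). intros r [a [Ha ->]]. specialize (Hb a Ha). lra.
  - destruct Hne as [a Ha]. exists (- f a), a; auto.
  - exists (- s). split; [|split].
    + assert (s <= - b); [|lra]. apply Hlub. intros r [a [Ha ->]]. specialize (Hb a Ha); lra.
    + intros a Ha. assert (- f a <= s) by (apply Hub; exists a; auto). lra.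
    + intros e He. apply NNPP; intro Hn. assert (s <= s - e); [|lra].
      apply Hlub. intros r [a [Ha ->]].
      destruct (Rlt_or_le (f a) (- s + e)); [exfalso; apply Hn; exists a; auto | lra].
Qed.

Lemma Req_0_of_small (a : R) : (forall e, 0 < e -> Rabs a < e) -> a = 0.
Proof.
  intro H. destruct (Req_dec a 0) as [|Ha]; auto.
  specialize (H (Rabs a) (Rabs_pos_lt a Ha)). lra.
Qed.

Lemma Rle_of_small (a b : R) : (forall e, 0 < e -> a < b + e) -> a <= b.
Proof.
  intro H. destruct (Rle_or_lt a b) as [|Hl]; auto. specialize (H (a - b) ltac:(lra)). lra.
Qed.

Lemma inv_INR_S_pos (n : nat) : 0 < / (INR n + 1).
Proof. apply Rinv_0_lt_compat. pose proof (pos_INR n); lra. Qed.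

Lemma inv_INR_S_lt (e : R) : 0 < e -> exists N : nat, / (INR N + 1) < e.
Proof.
  intro He. destruct (INR_archimed e 1 He) as [N HN]. exists N.
  pose proof (pos_INR N).
  apply Rmult_lt_reg_r with (INR N + 1); [lra|]. rewrite Rinv_l by lra. nra.
Qed.

Lemma inv_INR_S_le (N n : nat) : (N <= n)%nat -> / (INR n + 1) <= / (INR N + 1).
Proof.
  intro H. apply Rinv_le_contravar; [pose proof (pos_INR N); lra|].
  apply le_INR in H. lra.
Qed.

Lemma derivable_pt_lim_affine (c k : R) : derivable_pt_lim (fun t => c + t * k) 0 k.
Proof.
  intros eps He. exists (mkposreal eps He). intros h Hh _.
  replace ((c + (0 + h) * k - (c + 0 * k)) / h - k) with 0 by (field; auto).
  rewrite Rabs_R0; auto.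
Qed.

Lemma derivable_pt_lim_0_le (f g : R -> R) (lf lg : R) :
  derivable_pt_lim f 0 lf -> derivable_pt_lim g 0 lg ->
  f 0 = g 0 -> (forall t, 0 < t -> f t <= g t) -> lf <= lg.
Proof.
  intros Hf Hg E0 Hle. apply Rnot_lt_le; intro Hlt.
  set (e := (lf - lg) / 2).
  destruct (Hf e ltac:(unfold e; lra)) as [d1 H1].
  destruct (Hg e ltac:(unfold e; lra)) as [d2 H2].
  set (h := Rmin d1 d2 / 2).
  pose proof (cond_pos d1). pose proof (cond_pos d2).
  pose proof (Rmin_l d1 d2). pose proof (Rmin_r d1 d2).
  assert (Hh : 0 < h) by (unfold h; apply Rmin_case; lra).
  assert (Habs : Rabs h = h) by (apply Rabs_right; lra).
  specialize (H1 h ltac:(lra) ltac:(unfold h in *; lra)).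
  specialize (H2 h ltac:(lra) ltac:(unfold h in *; lra)).
  rewrite Rplus_0_l in H1, H2. apply Rabs_def2 in H1. apply Rabs_def2 in H2.
  assert ((f h - f 0) / h <= (g h - g 0) / h).
  { apply Rmult_le_compat_r; [left; apply Rinv_0_lt_compat; auto | specialize (Hle h Hh); lra]. }
  unfold e in *; lra.
Qed.

Section NormDerivative.
Variable E : NormedSpace.
Hypothesis US : uniformly_smooth E.

Definition norm_quot (x y : E) (t : R) : R := (vnorm (vadd x (vscal t y)) - vnorm x) / t.

Lemma norm_quot_mono (x y : E) (s t : R) : 0 < s -> s <= t ->
  norm_quot x y s <= norm_quot x y t.
Proof.
  intros Hs Hst. unfold norm_quot.
  assert (Hconv : vnorm (vadd x (vscal s y))
                  <= (1 - s / t) * vnorm x + (s / t) * vnorm (vadd x (vscal t y))).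
  { replace (vadd x (vscal s y))
      with (vadd (vscal (1 - s / t) x) (vscal (s / t) (vadd x (vscal t y))))
      by (vector_eq x y y; field; lra).
    assert (s / t <= 1) by (apply Rmult_le_reg_r with t; [lra|]; field_simplify; lra).
    assert (0 < s / t) by (apply Rdiv_lt_0_compat; lra).
    eapply Rle_trans; [apply vnorm_triangle|].
    rewrite !vnorm_scal_pos by lra. lra. }
  apply Rmult_le_reg_r with (s * t); [nra|].
  replace ((vnorm (vadd x (vscal s y)) - vnorm x) / s * (s * t))
    with ((vnorm (vadd x (vscal s y)) - vnorm x) * t) by (field; lra).
  replace ((vnorm (vadd x (vscal t y)) - vnorm x) / t * (s * t))
    with ((vnorm (vadd x (vscal t y)) - vnorm x) * s) by (field; lra).
  apply (Rmult_le_compat_r t) in Hconv; [|lra].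
  replace (((1 - s / t) * vnorm x + s / t * vnorm (vadd x (vscal t y))) * t)
    with (vnorm x * t - vnorm x * s + s * vnorm (vadd x (vscal t y))) in Hconv by (field; lra).
  lra.
Qed.

Lemma norm_quot_lower (x y : E) (t : R) : 0 < t -> - vnorm y <= norm_quot x y t.
Proof.
  intro Ht. unfold norm_quot.
  assert (vnorm x <= vnorm (vadd x (vscal t y)) + t * vnorm y).
  { replace x with (vsub (vadd x (vscal t y)) (vscal t y)) at 1 by (vector_eq x y y; ring).
    rewrite <- (vnorm_scal_pos _ t y) by lra. apply vnorm_sub_le. }
  replace (- vnorm y) with ((- t * vnorm y) / t) by (field; lra).
  apply Rmult_le_compat_r; [left; apply Rinv_0_lt_compat|]; lra.
Qed.

Lemma norm_quot_opp_le (x y : E) (t : R) : 0 < t -> norm_quot x y (- t) <= norm_quot x y t.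
Proof.
  intro Ht. unfold norm_quot.
  assert (2 * vnorm x <= vnorm (vadd x (vscal t y)) + vnorm (vadd x (vscal (- t) y))).
  { replace x with (vscal (/2) (vadd (vadd x (vscal t y)) (vadd x (vscal (- t) y))))
      at 1 by (vector_eq x y y; field).
    rewrite vnorm_scal_pos by lra.
    pose proof (vnorm_triangle E (vadd x (vscal t y)) (vadd x (vscal (- t) y))). lra. }
  replace ((vnorm (vadd x (vscal (- t) y)) - vnorm x) / - t)
    with ((vnorm x - vnorm (vadd x (vscal (- t) y))) / t) by (field; lra).
  apply Rmult_le_compat_r; [left; apply Rinv_0_lt_compat|]; lra.
Qed.

(* Rescaling [uniformly_smooth] from unit vectors to x and y. *)
Lemma norm_quot_gap (x y : E) : x <> vzero -> forall eps, 0 < eps ->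
  exists delta, 0 < delta /\ forall t, 0 < t < delta ->
    norm_quot x y t - norm_quot x y (- t) <= eps.
Proof.
  intros Hx eps He.
  assert (Hgap : forall t, 0 < t ->
    norm_quot x y t - norm_quot x y (- t)
    = (vnorm (vadd x (vscal t y)) + vnorm (vadd x (vscal (- t) y)) - 2 * vnorm x) / t)
    by (intros; unfold norm_quot; field; lra).
  destruct (classic (y = vzero)) as [->|Hy].
  { exists 1; split; [lra|]. intros t Ht. rewrite Hgap, !vscal_zero_r, vadd_zero by lra.
    replace ((vnorm x + vnorm x - 2 * vnorm x) / t) with 0 by (field; lra). lra. }
  pose proof (vnorm_pos E x Hx) as Nx. pose proof (vnorm_pos E y Hy) as Ny.
  destruct (US (eps / (2 * vnorm y))) as [d [Hd HU]]; [apply Rdiv_lt_0_compat; lra|].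
  exists (d * vnorm x / vnorm y); split; [apply Rdiv_lt_0_compat; nra|].
  intros t Ht. rewrite Hgap by lra.
  set (s := t * vnorm y / vnorm x).
  assert (Hs : 0 < s < d).
  { unfold s; split; [apply Rdiv_lt_0_compat; nra|].
    apply Rmult_lt_reg_r with (vnorm x / vnorm y); [apply Rdiv_lt_0_compat; lra|].
    replace (t * vnorm y / vnorm x * (vnorm x / vnorm y)) with t by (field; lra).
    replace (d * (vnorm x / vnorm y)) with (d * vnorm x / vnorm y) by (field; lra). lra. }
  set (u := vscal (/ vnorm x) x). set (v := vscal (/ vnorm y) y).
  assert (Hu : vnorm u = 1)
    by (unfold u; rewrite vnorm_scal_pos by (left; apply Rinv_0_lt_compat; lra); field; lra).
  assert (Hv : vnorm v = 1)
    by (unfold v; rewrite vnorm_scal_pos by (left; apply Rinv_0_lt_compat; lra); field; lra).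
  specialize (HU u v s Hu Hv Hs).
  replace (vadd x (vscal t y)) with (vscal (vnorm x) (vadd u (vscal s v)))
    by (unfold u, v, s; vector_eq x y y; field; lra).
  replace (vadd x (vscal (- t) y)) with (vscal (vnorm x) (vadd u (vscal (- s) v)))
    by (unfold u, v, s; vector_eq x y y; field; lra).
  rewrite !vnorm_scal_pos by lra.
  apply Rmult_le_reg_r with t; [lra|].
  replace ((vnorm x * vnorm (vadd u (vscal s v)) + vnorm x * vnorm (vadd u (vscal (- s) v))
            - 2 * vnorm x) / t * t)
    with (2 * vnorm x * ((vnorm (vadd u (vscal s v)) + vnorm (vadd u (vscal (- s) v))) / 2 - 1))
    by (field; lra).
  apply Rle_trans with (2 * vnorm x * (eps / (2 * vnorm y) * s)); [apply Rmult_le_compat_l; lra|].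
  unfold s. right; field; lra.
Qed.

(* The derivative is the infimum of the right difference quotients, which
   decrease as t -> 0+ by convexity of the norm; uniform smoothness brings
   the left quotients to the same limit. *)
Lemma norm_directional_derivable (x y : E) : x <> vzero ->
  exists l, derivable_pt_lim (fun t => vnorm (vadd x (vscal t y))) 0 l.
Proof.
  intro Hx.
  destruct (exists_inf (fun t => 0 < t) (norm_quot x y) (- vnorm y))
    as [L [_ [HL Happrox]]].
  { exists 1; lra. }
  { apply norm_quot_lower. }
  exists L. intros eps He.
  destruct (Happrox eps He) as [t0 [Ht0 Hq0]].
  destruct (norm_quot_gap x y Hx (eps / 2)) as [ds [Hds Hgap]]; [lra|].
  assert (Hd : 0 < Rmin t0 ds) by (apply Rmin_case; lra).
  exists (mkposreal _ Hd). simpl. intros h Hh Hhd.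
  pose proof (Rmin_l t0 ds). pose proof (Rmin_r t0 ds).
  replace ((vnorm (vadd x (vscal (0 + h) y)) - vnorm (vadd x (vscal 0 y))) / h)
    with (norm_quot x y h) by (unfold norm_quot; rewrite Rplus_0_l, vscal_zero_l, vadd_zero; auto).
  apply Rabs_def1.
  - destruct (Rle_or_lt 0 h) as [Hp|Hn].
    + rewrite Rabs_right in Hhd by lra.
      pose proof (norm_quot_mono x y h t0 ltac:(lra) ltac:(lra)). lra.
    + rewrite Rabs_left in Hhd by lra.
      pose proof (norm_quot_mono x y (- h) t0 ltac:(lra) ltac:(lra)).
      pose proof (norm_quot_opp_le x y (- h) ltac:(lra)). rewrite Ropp_involutive in *. lra.
  - destruct (Rle_or_lt 0 h) as [Hp|Hn].
    + assert (0 < h) by lra. specialize (HL h H1). lra.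
    + rewrite Rabs_left in Hhd by lra.
      specialize (HL (- h) ltac:(lra)).
      specialize (Hgap (- h) ltac:(lra)). rewrite Ropp_involutive in Hgap. lra.
Qed.

(* The epsilon term of [sip], so that [sip_eq] holds by unfolding. *)
Definition Dv (x y : E) : R :=
  epsilon (inhabits 0) (fun l => derivable_pt_lim (fun t => vnorm (vadd x (vscal t y))) 0 l).

Lemma Dv_spec (x y : E) : x <> vzero ->
  derivable_pt_lim (fun t => vnorm (vadd x (vscal t y))) 0 (Dv x y).
Proof. intro Hx. unfold Dv. apply epsilon_spec, norm_directional_derivable, Hx. Qed.

Lemma sip_eq (x y : E) : x <> vzero -> sip y x = vnorm x * Dv x y.
Proof.
  intro Hx. unfold sip. destruct (excluded_middle_informative (x = vzero)); [contradiction|].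
  reflexivity.
Qed.

Lemma sip_zero_r (y : E) : sip y vzero = 0.
Proof. unfold sip. destruct (excluded_middle_informative _) as [|Hn]; [auto | now contradict Hn]. Qed.

Lemma Dv_scal (x y : E) (a : R) : x <> vzero -> Dv x (vscal a y) = a * Dv x y.
Proof.
  intro Hx.
  assert (H : derivable_pt_lim (fun t => vnorm (vadd x (vscal t y)))
                ((fun t => 0 + t * a) 0) (Dv x y)).
  { replace ((fun t => 0 + t * a) 0) with 0 by ring. apply Dv_spec, Hx. }
  pose proof (derivable_pt_lim_comp _ _ _ _ _ (derivable_pt_lim_affine 0 a) H) as Hc.
  replace (comp (fun t => vnorm (vadd x (vscal t y))) (fun t => 0 + t * a))
    with (fun t => vnorm (vadd x (vscal t (vscal a y)))) in Hc.
  - rewrite (uniqueness_limite _ _ _ _ (Dv_spec x (vscal a y) Hx) Hc). ring.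
  - apply functional_extensionality; intro t. unfold comp. f_equal. vector_eq x y y; ring.
Qed.

Lemma Dv_add_le (x y z : E) : x <> vzero -> Dv x (vadd y z) <= Dv x y + Dv x z.
Proof.
  intro Hx.
  pose proof (derivable_pt_lim_scal _ (/2) _ _ (derivable_pt_lim_plus _ _ _ _ _
    (Dv_spec x (vscal 2 y) Hx) (Dv_spec x (vscal 2 z) Hx))) as Hg.
  rewrite !Dv_scal in Hg by auto.
  replace (Dv x y + Dv x z) with (/ 2 * (2 * Dv x y + 2 * Dv x z)) by field.
  eapply derivable_pt_lim_0_le; [apply Dv_spec, Hx | exact Hg | |].
  - unfold mult_real_fct, plus_fct. rewrite !vscal_zero_l, !vadd_zero. field.
  - intros t Ht. unfold mult_real_fct, plus_fct.
    replace (vadd x (vscal t (vadd y z))) with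
      (vadd (vscal (/2) (vadd x (vscal t (vscal 2 y))))
            (vscal (/2) (vadd x (vscal t (vscal 2 z)))))
      by (vector_eq x y z; field).
    eapply Rle_trans; [apply vnorm_triangle|]. rewrite !vnorm_scal_pos by lra. lra.
Qed.

Lemma Dv_add (x y z : E) : x <> vzero -> Dv x (vadd y z) = Dv x y + Dv x z.
Proof.
  intro Hx. apply Rle_antisym; [apply Dv_add_le, Hx|].
  pose proof (Dv_add_le x (vscal (-1) y) (vscal (-1) z) Hx) as H.
  rewrite <- vscal_distr_l, !Dv_scal in H by auto. lra.
Qed.

Lemma Dv_le (x y : E) : x <> vzero -> Dv x y <= vnorm y.
Proof.
  intro Hx.
  eapply derivable_pt_lim_0_le; [apply Dv_spec, Hx | apply (derivable_pt_lim_affine (vnorm x)) | |].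
  - cbv beta. rewrite vscal_zero_l, vadd_zero. ring.
  - intros t Ht. cbv beta. eapply Rle_trans; [apply vnorm_triangle|].
    rewrite vnorm_scal_pos; lra.
Qed.

Lemma sip_add (x y z : E) : sip (vadd y z) x = sip y x + sip z x.
Proof.
  destruct (classic (x = vzero)) as [->|Hx]; [rewrite !sip_zero_r; ring|].
  rewrite !sip_eq, Dv_add by auto. ring.
Qed.

Lemma sip_scal (x y : E) (a : R) : sip (vscal a y) x = a * sip y x.
Proof.
  destruct (classic (x = vzero)) as [->|Hx]; [rewrite !sip_zero_r; ring|].
  rewrite !sip_eq, Dv_scal by auto. ring.
Qed.

Lemma sip_sub (x y z : E) : sip (vsub y z) x = sip y x - sip z x.
Proof. unfold vsub. rewrite sip_add, vopp_scal, sip_scal. ring. Qed.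

Lemma sip_abs_le (x y : E) : Rabs (sip y x) <= vnorm x * vnorm y.
Proof.
  destruct (classic (x = vzero)) as [->|Hx].
  { rewrite sip_zero_r, Rabs_R0, vnorm_zero; lra. }
  rewrite sip_eq, Rabs_mult, (Rabs_right (vnorm x)) by (auto; apply Rle_ge, vnorm_nonneg).
  apply Rmult_le_compat_l; [apply vnorm_nonneg|].
  pose proof (Dv_le x y Hx). pose proof (Dv_le x (vscal (-1) y) Hx) as Hopp.
  rewrite Dv_scal, vnorm_scal, Rabs_left in Hopp by (auto; lra).
  apply Rabs_le; lra.
Qed.

Lemma sip_eq0_of_norm_min (x z : E) :
  (forall t, vnorm x <= vnorm (vadd x (vscal t z))) -> sip z x = 0.
Proof.
  intro Hmin. destruct (classic (x = vzero)) as [->|Hx]; [apply sip_zero_r|].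
  assert (Hnonneg : forall w, (forall t, vnorm x <= vnorm (vadd x (vscal t w))) -> 0 <= Dv x w).
  { intros w Hw.
    eapply derivable_pt_lim_0_le; [apply (derivable_pt_lim_affine (vnorm x) 0) | apply Dv_spec, Hx | |].
    - cbv beta. rewrite vscal_zero_l, vadd_zero. ring.
    - intros t _. cbv beta. rewrite Rmult_0_r, Rplus_0_r. apply Hw. }
  pose proof (Hnonneg z Hmin) as H1.
  pose proof (Hnonneg (vscal (-1) z)) as H2.
  rewrite Dv_scal in H2 by auto.
  rewrite sip_eq by auto.
  enough (Dv x z = 0) as -> by ring.
  assert (0 <= -1 * Dv x z); [|lra]. apply H2. intro t.
  rewrite vscal_assoc. apply Hmin.
Qed.

Definition converges_to (u : nat -> E) (l : E) : Prop :=
  forall eps, 0 < eps -> exists N, forall n, (N <= n)%nat -> vnorm (vsub (u n) l) < eps.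

Lemma sip_level_closed (u : nat -> E) (l z : E) (a : R) :
  (forall n, sip (u n) z = a) -> converges_to u l -> sip l z = a.
Proof.
  intros Hu Hl. apply Rminus_diag_uniq, Req_0_of_small. intros e He.
  pose proof (vnorm_nonneg E z).
  destruct (Hl (e / (vnorm z + 1))) as [N HN]; [apply Rdiv_lt_0_compat; lra|].
  specialize (HN N (le_n N)).
  replace (sip l z - a) with (- sip (vsub (u N) l) z) by (rewrite sip_sub, Hu; ring).
  rewrite Rabs_Ropp. eapply Rle_lt_trans; [apply sip_abs_le|].
  apply Rle_lt_trans with (vnorm z * (e / (vnorm z + 1))); [apply Rmult_le_compat_l; lra|].
  apply Rmult_lt_reg_r with (vnorm z + 1); [lra|]. field_simplify; lra.
Qed.

End NormDerivative.

Section MinimalNorm.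
Variable E : NormedSpace.
Hypothesis UC : uniformly_convex E.
Variable C : E -> Prop.
Hypothesis C_midpoint : forall a b, C a -> C b -> C (vscal (/2) (vadd a b)).

Lemma near_minimal_close (d : R) : 0 <= d -> (forall c, C c -> d <= vnorm c) ->
  forall eps, 0 < eps -> exists eta, 0 < eta /\ forall a b, C a -> C b ->
    vnorm a <= d + eta -> vnorm b <= d + eta -> vnorm (vsub a b) < eps.
Proof.
  intros Hd0 Hd eps Heps. destruct Hd0 as [Hd0|<-].
  - set (eps' := Rmin (eps / (d + 1)) 2).
    assert (Heps' : 0 < eps' <= 2)
      by (split; [apply Rmin_case; [apply Rdiv_lt_0_compat|]; lra | apply Rmin_r]).
    destruct (UC eps' Heps') as [delta [Hdelta HU]].
    pose proof (Rmin_l 1 (d * delta / 2)). pose proof (Rmin_r 1 (d * delta / 2)).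
    set (eta := Rmin 1 (d * delta / 2)) in *.
    assert (Heta : 0 < eta) by (apply Rmin_case; nra).
    exists eta; split; [exact Heta|]. intros a b Ca Cb Na Nb.
    apply Rnot_le_lt; intro Hab.
    set (r := d + eta). assert (Hr : 0 < / r) by (apply Rinv_0_lt_compat; unfold r; lra).
    assert (Hunit : forall w : E, vnorm w <= r -> vnorm (vscal (/ r) w) <= 1).
    { intros w Hw. rewrite vnorm_scal_pos by lra.
      apply Rmult_le_reg_l with r; [unfold r; lra|].
      rewrite <- Rmult_assoc, Rinv_r by (unfold r; lra). lra. }
    assert (Hsep : eps' <= vnorm (vsub (vscal (/ r) a) (vscal (/ r) b))).
    { replace (vsub (vscal (/ r) a) (vscal (/ r) b)) with (vscal (/ r) (vsub a b))
        by (vector_eq a b b; ring).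
      rewrite vnorm_scal_pos by lra.
      apply Rle_trans with (eps / (d + 1)); [apply Rmin_l|].
      apply Rle_trans with (/ r * eps); [|apply Rmult_le_compat_l; lra].
      unfold Rdiv. rewrite Rmult_comm. apply Rmult_le_compat_r; [lra|].
      apply Rinv_le_contravar; unfold r; lra. }
    specialize (HU _ _ (Hunit a Na) (Hunit b Nb) Hsep).
    replace (vscal (/ 2) (vadd (vscal (/ r) a) (vscal (/ r) b)))
      with (vscal (/ r) (vscal (/2) (vadd a b))) in HU by (vector_eq a b b; ring).
    rewrite vnorm_scal_pos in HU by lra.
    specialize (Hd _ (C_midpoint a b Ca Cb)).
    assert (d <= r * (1 - delta)).
    { apply Rmult_le_reg_l with (/ r); [exact Hr|].
      rewrite <- Rmult_assoc, Rinv_l by (unfold r; lra).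
      apply Rle_trans with (/ r * vnorm (vscal (/ 2) (vadd a b))); [apply Rmult_le_compat_l|]; lra. }
    unfold r in *. nra.
  - exists (eps / 3); split; [lra|]. intros a b _ _ Na Nb.
    pose proof (vnorm_sub_le E a b). lra.
Qed.

Lemma exists_min_norm : complete E -> (exists c, C c) ->
  (forall u l, (forall n, C (u n)) -> converges_to E u l -> C l) ->
  exists l, C l /\ forall c, C c -> vnorm l <= vnorm c.
Proof.
  intros HC Cne Cclosed.
  destruct (exists_inf C vnorm 0 Cne (fun c _ => vnorm_nonneg E c)) as [d [Hd0 [Hd Happrox]]].
  set (u := fun n : nat => epsilon (inhabits vzero)
              (fun c => C c /\ vnorm c < d + / (INR n + 1))).
  assert (Hu : forall n, C (u n) /\ vnorm (u n) < d + / (INR n + 1))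
    by (intro n; apply epsilon_spec, Happrox, inv_INR_S_pos).
  assert (Hu_le : forall N n, (N <= n)%nat -> vnorm (u n) < d + / (INR N + 1))
    by (intros N n Hn; pose proof (inv_INR_S_le N n Hn); pose proof (Hu n); lra).
  destruct (HC u) as [l Hl].
  { intros eps Heps.
    destruct (near_minimal_close d Hd0 Hd eps Heps) as [eta [Heta Hclose]].
    destruct (inv_INR_S_lt eta Heta) as [N HN]. exists N. intros n p Hn Hp.
    pose proof (Hu_le N n Hn). pose proof (Hu_le N p Hp).
    apply Hclose; try apply Hu; lra. }
  exists l. split; [apply (Cclosed u l); [intro n; apply Hu | exact Hl]|].
  intros c Hc. apply Rle_trans with d; [|apply Hd, Hc].
  apply Rle_of_small. intros e He.
  destruct (Hl (e / 2)) as [N1 HN1]; [lra|].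
  destruct (inv_INR_S_lt (e / 2)) as [N2 HN2]; [lra|].
  pose proof (HN1 (Nat.max N1 N2) ltac:(lia)).
  pose proof (Hu_le N2 (Nat.max N1 N2) ltac:(lia)).
  pose proof (vnorm_le_sub E l (u (Nat.max N1 N2))). lra.
Qed.

End MinimalNorm.

Definition rlinear {E : NormedSpace} (f : E -> R) : Prop :=
  (forall u v, f (vadd u v) = f u + f v) /\ (forall a u, f (vscal a u) = a * f u).

Lemma rsum_ext (m : nat) (f g : nat -> R) :
  (forall i, (i < m)%nat -> f i = g i) -> rsum m f = rsum m g.
Proof.
  induction m; intro H; simpl; auto.
  rewrite IHm, H by (intros; try apply H; lia); auto.
Qed.

Lemma rsum_set_last (m : nat) (c : nat -> R) (k : R) (f : nat -> R) :
  rsum (S m) (fun i => (if Nat.eqb i m then k else c i) * f i)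
  = rsum m (fun i => c i * f i) + k * f m.
Proof.
  simpl. rewrite Nat.eqb_refl. f_equal. apply rsum_ext. intros i Hi.
  destruct (Nat.eqb i m) eqn:Ei; auto. apply Nat.eqb_eq in Ei; lia.
Qed.

Section DualSpan.
Variables (E : NormedSpace) (psi : nat -> E -> R).
Hypothesis psi_linear : forall i, rlinear (psi i).

Definition common_kernel (m : nat) (y : E) : Prop := forall i, (i < m)%nat -> psi i y = 0.

(* If psi m vanishes on the common kernel of psi 0 .. psi (m-1), take k = 0;
   otherwise normalize phi by a point y0 of that kernel where psi m y0 <> 0. *)
Lemma exists_coef_last (m : nat) (phi : E -> R) : rlinear phi ->
  (forall y, common_kernel (S m) y -> phi y = 0) ->
  exists k, forall y, common_kernel m y -> phi y = k * psi m y.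
Proof.
  intros [phi_add phi_scal] Hphi.
  destruct (classic (forall y, common_kernel m y -> psi m y = 0)) as [Hc|Hc].
  - exists 0. intros y Hy. rewrite Rmult_0_l. apply Hphi. intros i Hi.
    destruct (Nat.eq_dec i m) as [->|]; [apply Hc, Hy | apply Hy; lia].
  - apply not_all_ex_not in Hc. destruct Hc as [y0 Hy0].
    apply imply_to_and in Hy0. destruct Hy0 as [Hy0 Hm0].
    exists (phi y0 / psi m y0). intros y Hy.
    set (w := vadd y (vscal (- (psi m y / psi m y0)) y0)).
    assert (Hw : phi w = 0).
    { apply Hphi. intros i Hi. destruct (psi_linear i) as [psi_add psi_scal].
      unfold w. rewrite psi_add, psi_scal.
      destruct (Nat.eq_dec i m) as [->|Hne]; [field; auto|].
      rewrite (Hy i), (Hy0 i) by lia. ring. }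
    unfold w in Hw. rewrite phi_add, phi_scal in Hw.
    replace (phi y) with (psi m y / psi m y0 * phi y0) by lra.
    field; auto.
Qed.

Lemma in_span_of_common_kernel (m : nat) (phi : E -> R) : rlinear phi ->
  (forall y, common_kernel m y -> phi y = 0) ->
  exists c : nat -> R, forall y, phi y = rsum m (fun i => c i * psi i y).
Proof.
  revert phi. induction m as [|m IH]; intros phi Hlin Hphi.
  - exists (fun _ => 0). intro y. apply Hphi. intros i Hi; lia.
  - destruct (exists_coef_last m phi Hlin Hphi) as [k Hk].
    destruct (IH (fun y => phi y - k * psi m y)) as [c Hc].
    + destruct Hlin as [phi_add phi_scal]. destruct (psi_linear m) as [psi_add psi_scal].
      split; intros; [rewrite phi_add, psi_add | rewrite phi_scal, psi_scal]; ring.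
    + intros y Hy. rewrite (Hk y Hy). ring.
    + exists (fun i => if Nat.eqb i m then k else c i). intro y.
      rewrite rsum_set_last, <- Hc. ring.
Qed.

End DualSpan.

Lemma dual_rlinear (E : NormedSpace) (US : uniformly_smooth E) (x : E) : rlinear (dual x).
Proof. split; intros; [apply sip_add | apply sip_scal]; exact US. Qed.

Theorem mainTheorem10 (E : NormedSpace) (HE : uniform_banach E)
  (m : nat) (x : nat -> E) (f0 : E) :
  exists g : E,
    (forall i, (i < m)%nat -> sip g (x i) = 0) /\
    in_dual_span m x (dual (vadd f0 g)) /\
    vnorm (vadd f0 g) <= vnorm f0.
Proof.
  destruct HE as [HC [UC US]].
  set (C := fun h : E => forall i, (i < m)%nat -> sip h (x i) = sip f0 (x i)).
  destruct (exists_min_norm E UC C) as [l [Cl Hmin]]; auto.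
  - intros a b Ca Cb i Hi. rewrite sip_scal, sip_add, Ca, Cb by auto. field.
  - exists f0. intros i _. reflexivity.
  - intros u l Cu Hl i Hi. apply (sip_level_closed E US u l); auto. intro n; apply Cu, Hi.
  - exists (vsub l f0). rewrite vadd_vsub. split; [|split].
    + intros i Hi. rewrite sip_sub, Cl by auto. ring.
    + apply (in_span_of_common_kernel E (fun i => dual (x i)));
        [intro i; apply dual_rlinear, US | apply dual_rlinear, US |].
      intros y Hy. apply sip_eq0_of_norm_min; [exact US|]. intro t. apply Hmin.
      intros i Hi. rewrite sip_add, sip_scal, Cl by auto. unfold dual in Hy. rewrite Hy by auto. ring.
    + apply Hmin. intros i _. reflexivity.
Qed.
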